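(* For every $n\ge1$, \[ \inf_{\boldsymbol x\in S^n}C(\boldsymbol x)\ge\frac{\Lambda^2}{2\big(2n+2\operatorname{card}(E_{II})+\operatorname{card}(E_{IL})\big)}, \] where $\Lambda=\lambda(S)$.
   Context: Network: $(V,E)$ is a finite connected graph with at least one edge and no vertex of degree $2$; each edge $e$ has a length $\lambda(e)>0$. $S$ is the metric measure space obtained by identifying each edge with a segment of length $\lambda(e)$, with length measure $\lambda$ and shortest-path distance $d$. $V_I$ is the set of vertices of degree $\ge3$ and $V_L$ the set of vertices of degree $1$. $E_{II}$ is the set of edges with both endpoints in $V_I$, and $E_{IL}$ the set of edges with one endpoint in $V_I$ and the other in $V_L$. For $\boldsymbol x=(x_1,\dots,x_n)\in S^n$, the social cost is \[ C(\boldsymbol x)=\int_S\min_i d(x_i,y)\,d\lambda(y). \] *)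

From Stdlib Require Import Reals Lra List ClassicalEpsilon.
Import ListNotations.
Open Scope R_scope.

Definition sumR (n : nat) (f : nat -> R) : R :=
  fold_right (fun i acc => f i + acc) 0 (seq 0 n).

Fixpoint minR (n : nat) (f : nat -> R) : R :=
  match n with
  | O => 0
  | S O => f O
  | S m => Rmin (minR m f) (f m)
  end.

Definition countN (n : nat) (p : nat -> bool) : nat :=
  length (filter p (seq 0 n)).

(** Infimum of a set of reals (0 if the set is empty or unbounded below). *)
Definition Rinf (E : R -> Prop) : R :=
  match excluded_middle_informative
          (bound (fun y => E (- y)) /\ exists y, E (- y)) with
  | left H => - proj1_sig (completeness _ (proj1 H) (proj2 H))
  | right _ => 0
  end.

(** Riemann integral of f over [a,b] (0 if f is not Riemann integrable). *)
Definition RInt (f : R -> R) (a b : R) : R :=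
  match excluded_middle_informative (inhabited (Riemann_integrable f a b)) with
  | left H => RiemannInt (epsilon H (fun _ => True))
  | right _ => 0
  end.

(** A network: vertices 0..nv-1, edges 0..ne-1, edge e joins src e and tgt e
    and has length len e. *)

Definition degree (ne : nat) (src tgt : nat -> nat) (v : nat) : nat :=
  countN ne (fun e => orb (Nat.eqb (src e) v) (Nat.eqb (tgt e) v)).

Inductive walk (ne : nat) (src tgt : nat -> nat) : nat -> nat -> list nat -> Prop :=
  | walk_nil : forall u, walk ne src tgt u u []
  | walk_cons : forall u u' v e w,
      (e < ne)%nat ->
      ((src e = u /\ tgt e = u') \/ (tgt e = u /\ src e = u')) ->
      walk ne src tgt u' v w ->
      walk ne src tgt u v (e :: w).

Definition walk_length (len : nat -> R) (w : list nat) : R :=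
  fold_right (fun e acc => len e + acc) 0 w.

(** A point of the metric graph S: (e, t) is the point at distance t from
    src e along edge e, with 0 <= t <= len e. *)
Definition point := (nat * R)%type.

Definition is_point (ne : nat) (len : nat -> R) (p : point) : Prop :=
  (fst p < ne)%nat /\ 0 <= snd p <= len (fst p).

Definition endpoint_dist (src tgt : nat -> nat) (len : nat -> R)
  (p : point) (a : nat) (r : R) : Prop :=
  (a = src (fst p) /\ r = snd p) \/ (a = tgt (fst p) /\ r = len (fst p) - snd p).

(** Shortest-path distance in S: infimum of lengths of paths in S from p to q;
    such a path either stays inside a common edge, or leaves the edge of p
    through an endpoint, follows a walk in the graph, and enters the edge of q
    through one of its endpoints. *)
Definition dist (ne : nat) (src tgt : nat -> nat) (len : nat -> R)
  (p q : point) : R :=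
  Rinf (fun l =>
    (fst p = fst q /\ l = Rabs (snd p - snd q)) \/
    exists a b r s w,
      endpoint_dist src tgt len p a r /\
      endpoint_dist src tgt len q b s /\
      walk ne src tgt a b w /\
      l = r + walk_length len w + s).

Definition social_cost (ne : nat) (src tgt : nat -> nat) (len : nat -> R)
  (n : nat) (x : nat -> point) : R :=
  sumR ne (fun e =>
    RInt (fun t => minR n (fun i => dist ne src tgt len (x i) (e, t))) 0 (len e)).

Definition card_EII (ne : nat) (src tgt : nat -> nat) : nat :=
  countN ne (fun e => andb (Nat.leb 3 (degree ne src tgt (src e)))
                           (Nat.leb 3 (degree ne src tgt (tgt e)))).

Definition card_EIL (ne : nat) (src tgt : nat -> nat) : nat :=
  countN ne (fun e =>
    orb (andb (Nat.leb 3 (degree ne src tgt (src e)))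
              (Nat.eqb (degree ne src tgt (tgt e)) 1))
        (andb (Nat.eqb (degree ne src tgt (src e)) 1)
              (Nat.leb 3 (degree ne src tgt (tgt e))))).

Definition total_length (ne : nat) (len : nat -> R) : R := sumR ne len.

(* On an edge e of length L, the function t |-> min_i d(x_i, (e, t)) is 1-Lipschitz and at every
   point is at least the distance along e to the nearest site: a facility lying on e, or an endpoint
   of e of degree at least 3. Indeed a path reaching e through a leaf either starts on e or runs
   through all of e. Splitting [0, L] at the interior sites, a 1-Lipschitz function dominating the
   distance to k interior sites and c end sites has integral at least L^2 / (2 (2k + c)). Summing
   over the edges with the Engel form of Cauchy-Schwarz, sum L_e^2 / w_e >= (sum L_e)^2 / sum w_e,
   and, as no vertex has degree 2, sum_e (2 k_e + c_e) <= 2n + 2 card E_II + card E_IL. *)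

From Pilot Require Import Defs.
From Stdlib Require Import Reals List.
Open Scope R_scope.
From Stdlib Require Import Lra Lia Wf_nat Classical ClassicalEpsilon.
From Coquelicot Require Coquelicot.
Import ListNotations.

Lemma fold_right_sum_init (f : nat -> R) l c :
  fold_right (fun i acc => f i + acc) c l = fold_right (fun i acc => f i + acc) 0 l + c.
Proof. induction l as [|a l IH]; simpl; [ring | rewrite IH; ring]. Qed.

Lemma sumR_O f : sumR 0 f = 0.
Proof. reflexivity. Qed.

Lemma sumR_S k f : sumR (S k) f = sumR k f + f k.
Proof. unfold sumR. rewrite seq_S, fold_right_app; simpl. rewrite fold_right_sum_init. ring. Qed.

Lemma sumR_ext k f g : (forall e, (e < k)%nat -> f e = g e) -> sumR k f = sumR k g.
Proof.
  induction k as [|k IH]; intros H; [reflexivity|].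
  rewrite !sumR_S, H, IH; auto.
Qed.

Lemma sumR_le k f g : (forall e, (e < k)%nat -> f e <= g e) -> sumR k f <= sumR k g.
Proof.
  induction k as [|k IH]; intros H; [rewrite !sumR_O; lra|]. rewrite !sumR_S.
  assert (f k <= g k) by (apply H; lia).
  assert (sumR k f <= sumR k g) by (apply IH; intros; apply H; lia). lra.
Qed.

Lemma sumR_plus k f g : sumR k (fun e => f e + g e) = sumR k f + sumR k g.
Proof. induction k as [|k IH]; [rewrite !sumR_O; ring|]. rewrite !sumR_S, IH; ring. Qed.

Lemma sumR_scal k c f : sumR k (fun e => c * f e) = c * sumR k f.
Proof. induction k as [|k IH]; [rewrite !sumR_O; ring|]. rewrite !sumR_S, IH; ring. Qed.

Lemma sumR_zero k : sumR k (fun _ => 0) = 0.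
Proof. induction k as [|k IH]; [reflexivity|]. rewrite sumR_S, IH; ring. Qed.

Lemma sumR_pos k w : (1 <= k)%nat -> (forall e, (e < k)%nat -> 0 < w e) -> 0 < sumR k w.
Proof.
  induction k as [|k IH]; intros Hk H; [lia|]. rewrite sumR_S.
  assert (0 < w k) by (apply H; lia).
  destruct k; [rewrite sumR_O; lra|].
  assert (0 < sumR (S k) w) by (apply IH; [lia | intros; apply H; lia]). lra.
Qed.

Lemma sqr_add_div_le x y a b : 0 < a -> 0 < b -> (x + y)^2 / (a + b) <= x^2 / a + y^2 / b.
Proof.
  intros Ha Hb.
  assert (E : x^2/a + y^2/b - (x+y)^2/(a+b) = (x*b - y*a)^2 / (a*b*(a+b))) by (field; lra).
  assert (0 <= (x*b - y*a)^2 / (a*b*(a+b))).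
  { apply Rmult_le_pos; [apply pow2_ge_0|]. left; apply Rinv_0_lt_compat.
    apply Rmult_lt_0_compat; [apply Rmult_lt_0_compat|]; lra. }
  lra.
Qed.

Lemma sumR_sqr_div_le k x w : (forall e, (e < k)%nat -> 0 < w e) ->
  (sumR k x)^2 / sumR k w <= sumR k (fun e => x e ^ 2 / w e).
Proof.
  induction k as [|k IH]; intros Hw; [rewrite !sumR_O; simpl; lra|]. rewrite !sumR_S.
  destruct k; [rewrite !sumR_O, !Rplus_0_l; lra|].
  assert (0 < sumR (S k) w) by (apply sumR_pos; [lia | intros; apply Hw; lia]).
  assert (0 < w (S k)) by (apply Hw; lia).
  assert (IH' := IH ltac:(intros; apply Hw; lia)).
  assert (C := sqr_add_div_le (sumR (S k) x) (x (S k)) (sumR (S k) w) (w (S k)) H H0). lra.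
Qed.

Lemma countN_S k p : countN (S k) p = (countN k p + if p k then 1 else 0)%nat.
Proof. unfold countN. rewrite seq_S, filter_app, length_app. simpl. destruct (p k); simpl; lia. Qed.

Lemma INR_countN k p : INR (countN k p) = sumR k (fun e => if p e then 1 else 0).
Proof.
  induction k as [|k IH]; [reflexivity|].
  rewrite countN_S, sumR_S, plus_INR, IH. destruct (p k); simpl; ring.
Qed.

Lemma sumR_indicator c k :
  sumR k (fun e => if Nat.eqb c e then 1 else 0) = if Nat.ltb c k then 1 else 0.
Proof.
  induction k as [|k IH]; [reflexivity|]. rewrite sumR_S, IH.
  destruct (Nat.ltb_spec c k), (Nat.ltb_spec c (S k)), (Nat.eqb_spec c k); try lia; ring.
Qed.

Lemma sumR_count_fibres_le (f : nat -> nat) k m :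
  sumR m (fun e => INR (countN k (fun i => Nat.eqb (f i) e))) <= INR k.
Proof.
  induction k as [|k IH]; [simpl; rewrite sumR_zero; lra|].
  rewrite (sumR_ext m _ (fun e => INR (countN k (fun i => Nat.eqb (f i) e))
                                  + if Nat.eqb (f k) e then 1 else 0)).
  - rewrite sumR_plus, sumR_indicator, S_INR. destruct (Nat.ltb _ _); lra.
  - intros e _. rewrite countN_S, plus_INR. destruct (Nat.eqb (f k) e); simpl; ring.
Qed.

Lemma Rinf_le (E : R -> Prop) l : E l -> (exists M, forall y, E y -> M <= y) -> Rinf E <= l.
Proof.
  intros Hl [M HM]. unfold Rinf. destruct excluded_middle_informative as [H|H].
  - destruct (completeness _ _ _) as [sup [Hub Hlub]]; simpl.
    assert (- l <= sup) by (apply Hub; rewrite Ropp_involutive; auto). lra.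
  - exfalso; apply H. split.
    + exists (- M). intros y Hy. apply HM in Hy. lra.
    + exists (- l). rewrite Ropp_involutive; auto.
Qed.

Lemma Rinf_ge (E : R -> Prop) m : (exists l, E l) -> (exists M, forall y, E y -> M <= y) ->
  (forall y, E y -> m <= y) -> m <= Rinf E.
Proof.
  intros [l Hl] [M HM] Hm. unfold Rinf. destruct excluded_middle_informative as [H|H].
  - destruct (completeness _ _ _) as [sup [Hub Hlub]]; simpl.
    assert (sup <= - m); [|lra].
    apply Hlub. intros y Hy. apply Hm in Hy. lra.
  - exfalso; apply H. split.
    + exists (- M). intros y Hy. apply HM in Hy. lra.
    + exists (- l). rewrite Ropp_involutive; auto.
Qed.

Lemma finite_gap {A} (P : A -> Prop) (g : A -> R) c (O : list A) :
  (forall o, In o O -> P o -> c < g o) ->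
  exists d, 0 < d /\ forall o, In o O -> P o -> c + d <= g o.
Proof.
  induction O as [|a O IH]; intros H.
  - exists 1. split; [lra | intros _ []].
  - destruct IH as [d [Hd HO]]; [intros; apply H; simpl; auto|].
    destruct (classic (P a)) as [Pa|nPa].
    + assert (c < g a) by (apply H; simpl; auto).
      exists (Rmin d (g a - c)). split; [apply Rmin_pos; lra|].
      intros o [<-|Ho] Po.
      * assert (Rmin d (g a - c) <= g a - c) by apply Rmin_r. lra.
      * assert (Rmin d (g a - c) <= d) by apply Rmin_l. specialize (HO o Ho Po). lra.
    + exists d. split; auto. intros o [<-|Ho] Po; [contradiction | auto].
Qed.

Lemma Rinf_ge_option (E : R -> Prop) (O : list (Prop * R)) :
  (exists l, E l) -> (exists M, forall y, E y -> M <= y) ->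
  (forall l, E l -> exists o, In o O /\ fst o /\ snd o <= l) ->
  exists o, In o O /\ fst o /\ snd o <= Rinf E.
Proof.
  intros Hne Hb H. apply NNPP; intros Hn.
  destruct (finite_gap fst snd (Rinf E) O) as [d [Hd Hgap]].
  { intros o Ho Po. apply Rnot_le_lt. intros Hle. apply Hn. exists o; auto. }
  assert (Rinf E + d <= Rinf E); [|lra].
  apply Rinf_ge; auto. intros l Hl.
  destruct (H l Hl) as [o [Ho [Po Hv]]]. specialize (Hgap o Ho Po). lra.
Qed.

Definition Rleb (x y : R) : bool := if Rle_dec x y then true else false.

Definition nonexpansive (g : R -> R) : Prop := forall x y, Rabs (g x - g y) <= Rabs (x - y).

Definition b2r (b : bool) : R := if b then 1 else 0.

Definition site_weight (S : list R) (cu cv : bool) : R := 2 * INR (length S) + b2r cu + b2r cv.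

(* The sites are the points of S, together with u when cu holds and v when cv holds. *)
Definition dominates_site_dist (g : R -> R) (u v : R) (cu cv : bool) (S : list R) : Prop :=
  forall t, u <= t <= v ->
    (cu = true /\ t - u <= g t) \/ (cv = true /\ v - t <= g t) \/
    (exists s, In s S /\ Rabs (t - s) <= g t).

Lemma dominates_site_dist_left g u v cu cv s S : u <= s <= v ->
  dominates_site_dist g u v cu cv (s :: S) ->
  dominates_site_dist g u s cu true (filter (fun r => Rleb r s) S).
Proof.
  intros Hs Hdom t Ht.
  destruct (Hdom t ltac:(lra)) as [H|[[_ H]|[s0 [Hs0 H]]]].
  - left; exact H.
  - right; left. split; [reflexivity | lra].
  - destruct (Rle_dec s s0) as [Hge|Hlt].
    + right; left. split; [reflexivity|]. rewrite Rabs_left1 in H; lra.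
    + destruct Hs0 as [<-|Hs0]; [lra|].
      right; right. exists s0. split; [|exact H].
      apply filter_In. split; [exact Hs0|]. unfold Rleb. destruct (Rle_dec s0 s); [reflexivity | lra].
Qed.

Lemma dominates_site_dist_right g u v cu cv s S : u <= s <= v ->
  dominates_site_dist g u v cu cv (s :: S) ->
  dominates_site_dist g s v true cv (filter (fun r => negb (Rleb r s)) S).
Proof.
  intros Hs Hdom t Ht.
  destruct (Hdom t ltac:(lra)) as [[_ H]|[H|[s0 [Hs0 H]]]].
  - left. split; [reflexivity | lra].
  - right; left; exact H.
  - destruct (Rle_dec s0 s) as [Hle|Hgt].
    + left. split; [reflexivity|]. rewrite Rabs_right in H; lra.
    + destruct Hs0 as [<-|Hs0]; [lra|].
      right; right. exists s0. split; [|exact H].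
      apply filter_In. split; [exact Hs0|]. unfold Rleb. destruct (Rle_dec s0 s); [lra | reflexivity].
Qed.

Section Integral_lower_bound.
Import Coquelicot.Coquelicot.

Lemma nonexpansive_continuous g x : nonexpansive g -> continuous g x.
Proof.
  intros Hg. apply continuity_pt_filterlim. intros eps Heps.
  exists eps; split; [lra|]. intros y [_ Hy]; simpl in *; unfold R_dist in *.
  eapply Rle_lt_trans; [apply Hg | exact Hy].
Qed.

Lemma ex_RInt_nonexpansive g a b : nonexpansive g -> ex_RInt g a b.
Proof.
  intros Hg. apply (ex_RInt_continuous (V := R_CompleteNormedModule)).
  intros; apply nonexpansive_continuous, Hg.
Qed.

Lemma is_RInt_linear p c a b :
  is_RInt (fun t => p * (t - c)) a b (p * ((b - c)^2 - (a - c)^2) / 2).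
Proof.
  replace (p * ((b - c)^2 - (a - c)^2) / 2)
    with (minus ((fun t => p * (t - c)^2 / 2) b) ((fun t => p * (t - c)^2 / 2) a))
    by (unfold minus, plus, opp; simpl; field).
  apply (is_RInt_derive (V := R_CompleteNormedModule) (fun t => p * (t - c)^2 / 2)); intros t _.
  - auto_derive; auto. field.
  - apply continuity_pt_filterlim. reg.
Qed.

Lemma RInt_ge_linear g p c u v : nonexpansive g -> u <= v ->
  (forall t, u <= t <= v -> p * (t - c) <= g t) ->
  p * ((v - c)^2 - (u - c)^2) / 2 <= RInt g u v.
Proof.
  intros Hg Huv H. rewrite <- (is_RInt_unique _ _ _ _ (is_RInt_linear p c u v)).
  apply RInt_le; auto.
  - eexists; apply is_RInt_linear.
  - apply ex_RInt_nonexpansive, Hg.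
  - intros t Ht; apply H; lra.
Qed.

Lemma RInt_ge_left g u v : nonexpansive g -> u <= v ->
  (forall t, u <= t <= v -> t - u <= g t) -> (v - u)^2 / 2 <= RInt g u v.
Proof.
  intros Hg Huv H. replace ((v - u)^2 / 2) with (1 * ((v - u)^2 - (u - u)^2) / 2) by field.
  apply RInt_ge_linear; auto. intros t Ht. rewrite Rmult_1_l. auto.
Qed.

Lemma RInt_ge_right g u v : nonexpansive g -> u <= v ->
  (forall t, u <= t <= v -> v - t <= g t) -> (v - u)^2 / 2 <= RInt g u v.
Proof.
  intros Hg Huv H. replace ((v - u)^2 / 2) with (-1 * ((v - v)^2 - (u - v)^2) / 2) by field.
  apply RInt_ge_linear; auto. intros t Ht. specialize (H t Ht). lra.
Qed.

Lemma RInt_split_ge g u s v A B : nonexpansive g -> 0 < A -> 0 < B ->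
  (s - u)^2 / A <= RInt g u s -> (v - s)^2 / B <= RInt g s v ->
  (v - u)^2 / (A + B) <= RInt g u v.
Proof.
  intros Hg HA HB Hl Hr.
  assert (Hc : RInt g u s + RInt g s v = RInt g u v)
    by (apply (RInt_Chasles (V := R_CompleteNormedModule)); apply ex_RInt_nonexpansive, Hg).
  assert (C := sqr_add_div_le (s - u) (v - s) A B HA HB).
  replace (s - u + (v - s)) with (v - u) in C by ring. lra.
Qed.

Lemma RInt_ge_no_interior_site g u v cu cv : nonexpansive g -> u <= v ->
  dominates_site_dist g u v cu cv [] -> 0 < site_weight [] cu cv ->
  (v - u)^2 / (2 * site_weight [] cu cv) <= RInt g u v.
Proof.
  intros Hg Huv Hdom Hw.
  assert (Hdom' : forall t, u <= t <= v ->
                  (cu = true /\ t - u <= g t) \/ (cv = true /\ v - t <= g t))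
    by (intros t Ht; destruct (Hdom t Ht) as [H|[H|[s [[] _]]]]; auto).
  unfold site_weight, b2r in *; simpl length in *; rewrite INR_0 in *.
  destruct cu, cv.
  - set (m := (u + v) / 2).
    replace (2 * (2 * 0 + 1 + 1)) with (2 + 2) by ring.
    apply (RInt_split_ge g u m v); auto; try lra.
    + apply RInt_ge_left; auto; [unfold m; lra|].
      intros t Ht. destruct (Hdom' t ltac:(unfold m in *; lra)) as [[_ H]|[_ H]]; unfold m in *; lra.
    + apply RInt_ge_right; auto; [unfold m; lra|].
      intros t Ht. destruct (Hdom' t ltac:(unfold m in *; lra)) as [[_ H]|[_ H]]; unfold m in *; lra.
  - replace (2 * (2 * 0 + 1 + 0)) with 2 by ring.
    apply RInt_ge_left; auto. intros t Ht. destruct (Hdom' t Ht) as [[_ H]|[H _]]; [exact H | discriminate].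
  - replace (2 * (2 * 0 + 0 + 1)) with 2 by ring.
    apply RInt_ge_right; auto. intros t Ht. destruct (Hdom' t Ht) as [[H _]|[_ H]]; [discriminate | exact H].
  - lra.
Qed.

(* Split at an interior site s: it becomes an end site of both halves, so the weights add up. *)
Lemma RInt_ge_site_weight g : nonexpansive g -> forall S u v cu cv, u <= v ->
  (forall s, In s S -> u <= s <= v) -> dominates_site_dist g u v cu cv S ->
  0 < site_weight S cu cv ->
  (v - u)^2 / (2 * site_weight S cu cv) <= RInt g u v.
Proof.
  intros Hg S. induction S as [S IH] using (induction_ltof1 _ (@length R)).
  intros u v cu cv Huv HS Hdom Hw.
  destruct S as [|s S]; [apply RInt_ge_no_interior_site; auto|].
  assert (Hs : u <= s <= v) by (apply HS; left; reflexivity).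
  set (SL := filter (fun r => Rleb r s) S).
  set (SR := filter (fun r => negb (Rleb r s)) S).
  assert (HwL : 0 < site_weight SL cu true).
  { unfold site_weight, b2r. pose proof (pos_INR (length SL)). destruct cu; lra. }
  assert (HwR : 0 < site_weight SR true cv).
  { unfold site_weight, b2r. pose proof (pos_INR (length SR)). destruct cv; lra. }
  replace (2 * site_weight (s :: S) cu cv) with (2 * site_weight SL cu true + 2 * site_weight SR true cv).
  2: { unfold site_weight, SL, SR. simpl length.
       rewrite <- (filter_length (fun r => Rleb r s) S), S_INR, plus_INR. simpl b2r. ring. }
  apply (RInt_split_ge g u s v); auto; try lra.
  - apply IH; auto; [| lra | | apply (dominates_site_dist_left g u v cu cv); auto].
    + unfold ltof, SL; simpl. pose proof (filter_length_le (fun r => Rleb r s) S). lia.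
    + intros r Hr. apply filter_In in Hr as [Hr Hle]. unfold Rleb in Hle.
      destruct (Rle_dec r s); [|discriminate].
      assert (u <= r <= v) by (apply HS; right; exact Hr). lra.
  - apply IH; auto; [| lra | | apply (dominates_site_dist_right g u v cu cv); auto].
    + unfold ltof, SR; simpl. pose proof (filter_length_le (fun r => negb (Rleb r s)) S). lia.
    + intros r Hr. apply filter_In in Hr as [Hr Hgt]. unfold Rleb in Hgt.
      destruct (Rle_dec r s); [discriminate|].
      assert (u <= r <= v) by (apply HS; right; exact Hr). lra.
Qed.

Lemma RInt_Riemann_eq g a b : nonexpansive g -> a <= b -> Defs.RInt g a b = RInt g a b.
Proof.
  intros Hg Hab.
  assert (pr : Riemann_integrable g a b).
  { apply continuity_implies_RiemannInt; auto. intros x _.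
    apply continuity_pt_filterlim, nonexpansive_continuous, Hg. }
  rewrite (RInt_Reals g a b pr). unfold Defs.RInt.
  destruct excluded_middle_informative as [H|H];
    [apply RiemannInt_P5 | exfalso; apply H; constructor; exact pr].
Qed.

End Integral_lower_bound.

Lemma minR_attained n f : (1 <= n)%nat -> exists i, (i < n)%nat /\ minR n f = f i.
Proof.
  induction n as [|n IH]; intros Hn; [lia|]. destruct n as [|n]; [exists 0%nat; split; auto|].
  destruct (IH ltac:(lia)) as [i [Hi E]].
  change (minR (S (S n)) f) with (Rmin (minR (S n) f) (f (S n))).
  unfold Rmin; destruct Rle_dec; [exists i | exists (S n)]; split; auto.
Qed.

Lemma Rabs_bounds x : - Rabs x <= x <= Rabs x.
Proof. split; [pose proof (Rle_abs (- x)); rewrite Rabs_Ropp in *; lra | apply Rle_abs]. Qed.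

Lemma Rmin_nonexpansive a b c d r : Rabs (a - c) <= r -> Rabs (b - d) <= r ->
  Rabs (Rmin a b - Rmin c d) <= r.
Proof.
  intros H1 H2. apply Rabs_le. revert H1 H2.
  unfold Rabs; destruct Rcase_abs, Rcase_abs; unfold Rmin; destruct Rle_dec, Rle_dec; intros; lra.
Qed.

Lemma minR_nonexpansive n (f : nat -> R -> R) : (forall i, (i < n)%nat -> nonexpansive (f i)) ->
  nonexpansive (fun t => minR n (fun i => f i t)).
Proof.
  induction n as [|n IH]; intros H x y.
  - simpl. rewrite Rminus_0_r, Rabs_R0. apply Rabs_pos.
  - destruct n as [|n]; [apply H; lia|].
    change (Rabs (Rmin (minR (S n) (fun i => f i x)) (f (S n) x) -
                  Rmin (minR (S n) (fun i => f i y)) (f (S n) y)) <= Rabs (x - y)).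
    apply Rmin_nonexpansive; [apply IH; auto | apply H; lia].
Qed.

Lemma nonleaf_endpoints_split d1 d2 : (1 <= d1)%nat -> d1 <> 2%nat -> (1 <= d2)%nat -> d2 <> 2%nat ->
  b2r (negb (Nat.eqb d1 1)) + b2r (negb (Nat.eqb d2 1)) =
  2 * (if andb (Nat.leb 3 d1) (Nat.leb 3 d2) then 1 else 0) +
  (if orb (andb (Nat.leb 3 d1) (Nat.eqb d2 1)) (andb (Nat.eqb d1 1) (Nat.leb 3 d2)) then 1 else 0).
Proof.
  intros H1 H2 H3 H4.
  destruct d1 as [|[|[|d1]]]; try lia; destruct d2 as [|[|[|d2]]]; try lia; simpl; unfold b2r; ring.
Qed.

Section Network.

Variables (nv ne : nat) (src tgt : nat -> nat) (len : nat -> R).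

Definition incident (e v : nat) : Prop := src e = v \/ tgt e = v.

Definition nonleaf (v : nat) : bool := negb (Nat.eqb (degree ne src tgt v) 1).

Lemma In_incident_edges e v : (e < ne)%nat -> incident e v ->
  In e (filter (fun e => orb (Nat.eqb (src e) v) (Nat.eqb (tgt e) v)) (seq 0 ne)).
Proof.
  intros He Hi. apply filter_In. split; [apply in_seq; lia|].
  destruct Hi as [H|H]; rewrite H, Nat.eqb_refl; auto using Bool.orb_true_r.
Qed.

Lemma degree_pos e v : (e < ne)%nat -> incident e v -> (1 <= degree ne src tgt v)%nat.
Proof.
  intros He Hi. unfold degree, countN. pose proof (In_incident_edges e v He Hi) as H.
  destruct (filter _ _); [destruct H | simpl; lia].
Qed.

Lemma leaf_unique v e e' : degree ne src tgt v = 1%nat -> (e < ne)%nat -> (e' < ne)%nat ->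
  incident e v -> incident e' v -> e = e'.
Proof.
  intros Hd He He' Hi Hi'. destruct (Nat.eq_dec e e') as [|Hne]; auto. exfalso.
  unfold degree, countN in Hd.
  assert (Hl := NoDup_incl_length (l := [e; e'])
                  (l' := filter (fun e => orb (Nat.eqb (src e) v) (Nat.eqb (tgt e) v)) (seq 0 ne))).
  rewrite Hd in Hl. simpl in Hl.
  assert (2 <= 1)%nat; [|lia]. apply Hl.
  - constructor; [simpl; intros [H|[]]; auto | constructor; [simpl; auto | constructor]].
  - intros y [<-|[<-|[]]]; apply In_incident_edges; auto.
Qed.

Lemma walk_into_leaf u v w e : walk ne src tgt u v w -> w <> [] ->
  degree ne src tgt v = 1%nat -> (e < ne)%nat -> incident e v -> In e w.
Proof.
  induction 1 as [u|u u' v e1 w He1 Hinc Hw IH]; intros Hnil Hd He Hi; [contradiction|].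
  destruct w as [|e2 w].
  - inversion Hw; subst. left. eapply leaf_unique; eauto. unfold incident. tauto.
  - right. apply IH; auto. discriminate.
Qed.

Lemma walk_from_isolated_edge u v w e : degree ne src tgt (src e) = 1%nat ->
  degree ne src tgt (tgt e) = 1%nat -> (e < ne)%nat ->
  walk ne src tgt u v w -> incident e u -> incident e v.
Proof.
  intros H1 H2 He. induction 1 as [u|u u' v e1 w He1 Hinc Hw IH]; auto.
  intros Hu. apply IH.
  assert (Hdu : degree ne src tgt u = 1%nat) by (destruct Hu as [<-|<-]; auto).
  assert (e1 = e) by (eapply leaf_unique; eauto; unfold incident; tauto). subst e1.
  unfold incident; tauto.
Qed.

Hypothesis Hends : forall e, (e < ne)%nat -> (src e < nv)%nat /\ (tgt e < nv)%nat.
Hypothesis Hconn : forall u v, (u < nv)%nat -> (v < nv)%nat -> exists w, walk ne src tgt u v w.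

Lemma isolated_edge_unique e e' : degree ne src tgt (src e) = 1%nat ->
  degree ne src tgt (tgt e) = 1%nat -> (e < ne)%nat -> (e' < ne)%nat -> e' = e.
Proof.
  intros H1 H2 He He'.
  destruct (Hconn (src e) (src e')) as [w Hw]; [apply Hends; auto | apply Hends; auto |].
  assert (Hi : incident e (src e')) by (eapply walk_from_isolated_edge; eauto; left; auto).
  assert (Hd : degree ne src tgt (src e') = 1%nat) by (destruct Hi as [<-|<-]; auto).
  eapply leaf_unique; eauto. left; auto.
Qed.

Hypothesis Hlen : forall e, (e < ne)%nat -> 0 < len e.

Lemma walk_length_nonneg u v w : walk ne src tgt u v w -> 0 <= walk_length len w.
Proof. induction 1; simpl; [lra|]. assert (0 < len e) by auto. lra. Qed.

Lemma walk_length_ge_In u v w e : walk ne src tgt u v w -> In e w -> len e <= walk_length len w.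
Proof.
  induction 1 as [u|u u' v e1 w He1 Hinc Hw IH]; simpl; [intros []|].
  intros [<-|Hi].
  - assert (0 <= walk_length len w) by (eapply walk_length_nonneg; eauto). lra.
  - assert (0 < len e1) by auto. assert (len e <= walk_length len w) by auto. lra.
Qed.

Lemma endpoint_dist_nonneg p a r : is_point ne len p -> endpoint_dist src tgt len p a r -> 0 <= r.
Proof. intros [_ H] [[_ ->]|[_ ->]]; lra. Qed.

Definition path_lengths (p q : point) : R -> Prop :=
  fun l =>
    (fst p = fst q /\ l = Rabs (snd p - snd q)) \/
    exists a b r s w,
      endpoint_dist src tgt len p a r /\
      endpoint_dist src tgt len q b s /\
      walk ne src tgt a b w /\
      l = r + walk_length len w + s.

Lemma path_lengths_bounded_below p e t : is_point ne len p ->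
  exists M, forall y, path_lengths p (e, t) y -> M <= y.
Proof.
  intros Hp. exists (- (Rabs t + Rabs (len e))).
  intros y [[_ ->]|[a [b [r [s [w [Hr [Hs [Hw ->]]]]]]]]].
  - pose proof (Rabs_pos (snd p - snd (e, t))). pose proof (Rabs_pos t).
    pose proof (Rabs_pos (len e)). lra.
  - assert (0 <= r) by (eapply endpoint_dist_nonneg; eauto).
    assert (0 <= walk_length len w) by (eapply walk_length_nonneg; eauto).
    pose proof (Rabs_bounds t). pose proof (Rabs_bounds (len e)).
    destruct Hs as [[_ ->]|[_ ->]]; simpl; lra.
Qed.

Lemma path_lengths_nonempty p e t : is_point ne len p -> (e < ne)%nat ->
  exists l, path_lengths p (e, t) l.
Proof.
  intros [Hp _] He.
  destruct (Hconn (src (fst p)) (src e)) as [w Hw]; [apply Hends; auto | apply Hends; auto |].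
  eexists. right. exists (src (fst p)), (src e), (snd p), t, w.
  repeat split; auto; left; auto.
Qed.

(* Qualified because [Reals], imported after [Defs], exports a metric-space [dist]. *)
Lemma dist_nonexpansive p e : is_point ne len p -> (e < ne)%nat ->
  nonexpansive (fun t => Defs.dist ne src tgt len p (e, t)).
Proof.
  intros Hp He.
  assert (K : forall t1 t2,
             Defs.dist ne src tgt len p (e, t2) <= Defs.dist ne src tgt len p (e, t1) + Rabs (t1 - t2)).
  { intros t1 t2.
    change (Rinf (path_lengths p (e, t2)) <= Rinf (path_lengths p (e, t1)) + Rabs (t1 - t2)).
    assert (Rinf (path_lengths p (e, t2)) - Rabs (t1 - t2) <= Rinf (path_lengths p (e, t1))); [|lra].
    apply Rinf_ge; [apply path_lengths_nonempty; auto | apply path_lengths_bounded_below; auto |].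
    intros y Hy.
    assert (exists y', path_lengths p (e, t2) y' /\ y' <= y + Rabs (t1 - t2)) as [y' [Hy' Hle]].
    { pose proof (Rabs_bounds (t1 - t2)).
      destruct Hy as [[Hf ->]|[a [b [r [s [w [Hr [Hs [Hw ->]]]]]]]]].
      - exists (Rabs (snd p - t2)). split; [left; split; auto|].
        simpl. replace (snd p - t2) with ((snd p - t1) + (t1 - t2)) by ring. apply Rabs_triang.
      - destruct Hs as [[Hb ->]|[Hb ->]]; simpl in Hb |- *.
        + exists (r + walk_length len w + t2). split; [|lra].
          right. exists a, b, r, t2, w. repeat split; auto. left; auto.
        + exists (r + walk_length len w + (len e - t2)). split; [|lra].
          right. exists a, b, r, (len e - t2), w. repeat split; auto. right; auto. }
    assert (Rinf (path_lengths p (e, t2)) <= y')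
      by (apply Rinf_le; auto; apply path_lengths_bounded_below; auto).
    lra. }
  intros t1 t2. apply Rabs_le. pose proof (K t1 t2). pose proof (K t2 t1) as K21.
  rewrite Rabs_minus_sym in K21. lra.
Qed.

Hypothesis Hloop : forall e, (e < ne)%nat -> src e <> tgt e.

Definition edge_site_within (p : point) (e : nat) (t l : R) : Prop :=
  (nonleaf (src e) = true /\ t <= l) \/ (nonleaf (tgt e) = true /\ len e - t <= l) \/
  (fst p = e /\ Rabs (t - snd p) <= l).

Lemma long_path_site_within p e t l : is_point ne len p -> (e < ne)%nat -> 0 <= t <= len e ->
  len e <= l -> edge_site_within p e t l.
Proof.
  intros [Hp Hsp] He Ht Hl. unfold edge_site_within, nonleaf.
  destruct (Nat.eqb_spec (degree ne src tgt (src e)) 1) as [Hs|Hs];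
    [|left; split; [reflexivity | lra]].
  destruct (Nat.eqb_spec (degree ne src tgt (tgt e)) 1) as [Ht'|Ht'];
    [|right; left; split; [reflexivity | lra]].
  assert (Hpe : fst p = e) by (apply isolated_edge_unique; auto).
  right; right. split; [exact Hpe|]. rewrite Hpe in Hsp. apply Rabs_le. lra.
Qed.

Lemma enter_through_leaf p a b r w e : is_point ne len p -> degree ne src tgt b = 1%nat ->
  (e < ne)%nat -> incident e b -> walk ne src tgt a b w -> endpoint_dist src tgt len p a r ->
  (fst p = e /\ endpoint_dist src tgt len p b r) \/ len e <= walk_length len w.
Proof.
  intros [Hp _] Hb He Hinc Hw Hr. destruct w as [|e1 w].
  - assert (a = b) by (inversion Hw; reflexivity). subst a.
    left. split; [|exact Hr].
    apply (leaf_unique b); auto. destruct Hr as [[-> _]|[-> _]]; [left | right]; reflexivity.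
  - right. apply (walk_length_ge_In a b); auto. eapply walk_into_leaf; eauto. discriminate.
Qed.

Lemma endpoint_round_trip p e b r s t : fst p = e -> is_point ne len p -> 0 <= t <= len e ->
  endpoint_dist src tgt len p b r -> endpoint_dist src tgt len (e, t) b s ->
  src e <> tgt e -> Rabs (t - snd p) <= r + s.
Proof.
  intros Hpe [_ Hsp] Ht Hr Hs Hne. unfold endpoint_dist in *. rewrite Hpe in Hr, Hsp. apply Rabs_le.
  destruct Hr as [[-> ->]|[-> ->]], Hs as [[Hb ->]|[Hb ->]]; simpl in *; lra || congruence.
Qed.

Lemma path_length_site_within p e t l : is_point ne len p -> (e < ne)%nat -> 0 <= t <= len e ->
  path_lengths p (e, t) l -> edge_site_within p e t l.
Proof.
  intros Hp He Ht [[Hpe ->]|[a [b [r [s [w [Hr [Hs [Hw ->]]]]]]]]].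
  - right; right. simpl in *. split; [exact Hpe|]. rewrite Rabs_minus_sym. lra.
  - assert (0 <= r) by (eapply endpoint_dist_nonneg; eauto).
    assert (0 <= s) by (apply (endpoint_dist_nonneg (e, t) b); [split; auto | exact Hs]).
    assert (0 <= walk_length len w) by (eapply walk_length_nonneg; eauto).
    assert (Hbe : incident e b) by (destruct Hs as [[-> _]|[-> _]]; [left | right]; reflexivity).
    destruct (Nat.eq_dec (degree ne src tgt b) 1) as [Hleaf|Hnl].
    + destruct (enter_through_leaf p a b r w e) as [[Hpe Hr']|Hlong]; auto.
      * right; right. split; [exact Hpe|].
        pose proof (endpoint_round_trip p e b r s t Hpe Hp Ht Hr' Hs (Hloop e He)). lra.
      * apply long_path_site_within; auto. lra.
    + assert (Hb : nonleaf b = true) by (apply Bool.negb_true_iff, Nat.eqb_neq; exact Hnl).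
      destruct Hs as [[-> ->]|[-> ->]]; simpl in Hb |- *; [left | right; left]; split; auto; lra.
Qed.

Lemma dist_site_within p e t : is_point ne len p -> (e < ne)%nat -> 0 <= t <= len e ->
  edge_site_within p e t (Defs.dist ne src tgt len p (e, t)).
Proof.
  intros Hp He Ht. change (Defs.dist ne src tgt len p (e, t)) with (Rinf (path_lengths p (e, t))).
  destruct (Rinf_ge_option (path_lengths p (e, t))
              [(nonleaf (src e) = true, t); (nonleaf (tgt e) = true, len e - t);
               (fst p = e, Rabs (t - snd p))]) as [o [Ho [Po Vo]]].
  - apply path_lengths_nonempty; auto.
  - apply path_lengths_bounded_below; auto.
  - intros l Hl.
    destruct (path_length_site_within p e t l Hp He Ht Hl) as [[P V]|[[P V]|[P V]]];
      [exists (nonleaf (src e) = true, t) | exists (nonleaf (tgt e) = true, len e - t)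
      | exists (fst p = e, Rabs (t - snd p))]; simpl; intuition.
  - unfold edge_site_within. simpl in Ho.
    destruct Ho as [<-|[<-|[<-|[]]]]; simpl in *; tauto.
Qed.

Variables (n : nat) (x : nat -> point).
Hypothesis Hn : (1 <= n)%nat.
Hypothesis Hx : forall i, (i < n)%nat -> is_point ne len (x i).

Definition dist_to_nearest (e : nat) (t : R) : R :=
  minR n (fun i => Defs.dist ne src tgt len (x i) (e, t)).

Definition sites_on_edge (e : nat) : list R :=
  map (fun i => snd (x i)) (filter (fun i => Nat.eqb (fst (x i)) e) (seq 0 n)).

Definition edge_weight (e : nat) : R :=
  site_weight (sites_on_edge e) (nonleaf (src e)) (nonleaf (tgt e)).

Lemma In_sites_on_edge i : (i < n)%nat -> In (snd (x i)) (sites_on_edge (fst (x i))).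
Proof.
  intros Hi. apply (in_map (fun j => snd (x j))), filter_In. split; [apply in_seq; lia | apply Nat.eqb_refl].
Qed.

Lemma dist_to_nearest_dominates e : (e < ne)%nat ->
  dominates_site_dist (dist_to_nearest e) 0 (len e) (nonleaf (src e)) (nonleaf (tgt e))
    (sites_on_edge e).
Proof.
  intros He t Ht. unfold dist_to_nearest.
  destruct (minR_attained n (fun i => Defs.dist ne src tgt len (x i) (e, t)) Hn) as [i [Hi ->]].
  destruct (dist_site_within (x i) e t (Hx i Hi) He Ht) as [H|[H|[Hpe H]]].
  - left. rewrite Rminus_0_r. exact H.
  - right; left; exact H.
  - right; right. exists (snd (x i)). split; [|exact H].
    rewrite <- Hpe. apply In_sites_on_edge, Hi.
Qed.

Lemma edge_weight_pos e : (e < ne)%nat -> 0 < edge_weight e.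
Proof.
  intros He. unfold edge_weight, site_weight, b2r, nonleaf.
  pose proof (pos_INR (length (sites_on_edge e))).
  destruct (Nat.eqb_spec (degree ne src tgt (src e)) 1) as [Hs|Hs],
           (Nat.eqb_spec (degree ne src tgt (tgt e)) 1) as [Ht|Ht]; simpl; try lra.
  (* e is then the whole network, so it carries every x i *)
  assert (Hx0 : fst (x 0%nat) = e) by (apply isolated_edge_unique; auto; apply (Hx 0%nat); lia).
  pose proof (In_sites_on_edge 0%nat ltac:(lia)) as Hin. rewrite Hx0 in Hin.
  destruct (sites_on_edge e) as [|s S]; [contradiction|].
  simpl length. rewrite S_INR. pose proof (pos_INR (length S)). lra.
Qed.

Lemma edge_cost_ge e : (e < ne)%nat ->
  (len e)^2 / (2 * edge_weight e) <= RInt (dist_to_nearest e) 0 (len e).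
Proof.
  intros He. pose proof (Hlen e He).
  assert (Hg : nonexpansive (dist_to_nearest e)).
  { apply (minR_nonexpansive n (fun i t => Defs.dist ne src tgt len (x i) (e, t))).
    intros i Hi. apply dist_nonexpansive; auto. }
  rewrite RInt_Riemann_eq by (auto; lra).
  replace (len e) with (len e - 0) at 1 by ring. unfold edge_weight.
  apply RInt_ge_site_weight; auto; try lra.
  - intros s Hs. apply in_map_iff in Hs as [i [<- Hi]].
    apply filter_In in Hi as [Hi Hf]. apply in_seq in Hi. apply Nat.eqb_eq in Hf.
    destruct (Hx i ltac:(lia)) as [_ Hb]. rewrite Hf in Hb. exact Hb.
  - apply dist_to_nearest_dominates, He.
  - apply edge_weight_pos, He.
Qed.

Hypothesis Hdeg2 : forall v, (v < nv)%nat -> degree ne src tgt v <> 2%nat.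

Lemma sum_edge_weight_le :
  sumR ne edge_weight <= 2 * INR n + 2 * INR (card_EII ne src tgt) + INR (card_EIL ne src tgt).
Proof.
  unfold edge_weight, site_weight. rewrite !sumR_plus, sumR_scal.
  assert (Hsites : sumR ne (fun e => INR (length (sites_on_edge e))) <= INR n).
  { rewrite (sumR_ext ne _ (fun e => INR (countN n (fun i => Nat.eqb (fst (x i)) e)))).
    - apply sumR_count_fibres_le.
    - intros e _. unfold sites_on_edge, countN. rewrite length_map. reflexivity. }
  assert (Hends' : sumR ne (fun e => b2r (nonleaf (src e))) + sumR ne (fun e => b2r (nonleaf (tgt e)))
                   = 2 * INR (card_EII ne src tgt) + INR (card_EIL ne src tgt)).
  { unfold card_EII, card_EIL. rewrite !INR_countN, <- sumR_plus, <- sumR_scal, <- sumR_plus.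
    apply sumR_ext. intros e He. apply nonleaf_endpoints_split.
    - apply (degree_pos e); auto. left; reflexivity.
    - apply Hdeg2, Hends, He.
    - apply (degree_pos e); auto. right; reflexivity.
    - apply Hdeg2, Hends, He. }
  lra.
Qed.

End Network.

Theorem mainTheorem15
  (nv ne : nat) (src tgt : nat -> nat) (len : nat -> R)
  (* at least one edge *)
  (Hne : (1 <= ne)%nat)
  (* endpoints are vertices *)
  (Hends : forall e, (e < ne)%nat -> (src e < nv)%nat /\ (tgt e < nv)%nat)
  (* simple graph: no loops, no parallel edges *)
  (Hloop : forall e, (e < ne)%nat -> src e <> tgt e)
  (Hpar : forall e f, (e < ne)%nat -> (f < ne)%nat -> e <> f ->
            ~ ((src e = src f /\ tgt e = tgt f) \/ (src e = tgt f /\ tgt e = src f)))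
  (* positive lengths *)
  (Hlen : forall e, (e < ne)%nat -> 0 < len e)
  (* connected *)
  (Hconn : forall u v, (u < nv)%nat -> (v < nv)%nat -> exists w, walk ne src tgt u v w)
  (* no vertex of degree 2 *)
  (Hdeg2 : forall v, (v < nv)%nat -> degree ne src tgt v <> 2%nat)
  (n : nat) (Hn : (1 <= n)%nat)
  (x : nat -> point)
  (Hx : forall i, (i < n)%nat -> is_point ne len (x i)) :
  social_cost ne src tgt len n x >=
    (total_length ne len) ^ 2 /
    (2 * (2 * INR n + 2 * INR (card_EII ne src tgt) + INR (card_EIL ne src tgt))).
Proof.
  pose proof (edge_weight_pos nv ne src tgt len Hends Hconn n x Hn Hx) as Hpos.
  pose proof (edge_cost_ge nv ne src tgt len Hends Hconn Hlen Hloop n x Hn Hx) as Hcost.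
  pose proof (sum_edge_weight_le nv ne src tgt Hends n x Hdeg2) as Hw_le.
  set (w := edge_weight ne src tgt n x) in *.
  assert (Hw : forall e, (e < ne)%nat -> 0 < 2 * w e) by (intros e He; specialize (Hpos e He); lra).
  assert (Hw_sum : 0 < sumR ne w) by (apply sumR_pos; auto).
  pose proof (sumR_sqr_div_le ne len (fun e => 2 * w e) Hw) as Hcs. rewrite sumR_scal in Hcs.
  apply Rle_ge. unfold total_length.
  apply Rle_trans with (sumR ne (fun e => len e ^ 2 / (2 * w e))).
  - apply Rle_trans with ((sumR ne len)^2 / (2 * sumR ne w)); [|exact Hcs].
    unfold Rdiv. apply Rmult_le_compat_l; [apply pow2_ge_0|]. apply Rinv_le_contravar; lra.
  - apply sumR_le. exact Hcost.
Qed.
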